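(* Let $X$ be a $T_1$ topological space and $f,g\in T''(X)$. If $f\in M(g)$, then $Z(g)\subseteq Z(f)$.
   Context: $C(X)$ is the ring of real-valued continuous functions on $X$; a cozero set is a set $\{x: h(x)\neq 0\}$ with $h\in C(X)$. $T''(X)$ is the ring (under pointwise operations) of all functions $f\colon X\to\mathbb{R}$ for which there is a dense cozero set $U$ of $X$ with $f|_U$ continuous. $Z(f)=\{x\in X: f(x)=0\}$. $M(g)$ denotes the intersection of all maximal ideals of $T''(X)$ containing $g$. *)

From HB Require Import structures.
From mathcomp Require Import all_boot all_order all_algebra.
From mathcomp Require Import all_classical all_reals all_analysis.
Unset Printing Implicit Defensive.
Import Order.TTheory GRing.Theory Num.Theory numFieldNormedType.Exports.
Local Open Scope classical_set_scope.
Local Open Scope ring_scope.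

Definition cozero_set (R : realType) (X : topologicalType) (U : set X) : Prop :=
  exists h : X -> R, continuous h /\ U = [set x | h x != 0].

Definition Tpp (R : realType) (X : topologicalType) : set (X -> R) :=
  [set f | exists U : set X,
      cozero_set R X U /\ dense U /\ {within U, continuous f}].

Definition Tpp_ideal (R : realType) (X : topologicalType) (I : set (X -> R)) : Prop :=
  [/\ I `<=` Tpp R X,
      I (fun _ => 0),
      (forall a b, I a -> I b -> I (fun x => a x - b x)) &
      (forall r a, Tpp R X r -> I a -> I (fun x => r x * a x))].

Definition Tpp_maximal_ideal (R : realType) (X : topologicalType) (M : set (X -> R)) : Prop :=
  [/\ Tpp_ideal R X M, M <> Tpp R X &
      (forall J, Tpp_ideal R X J -> M `<=` J -> J = M \/ J = Tpp R X)].

(* M(g): intersection of all maximal ideals of T''(X) containing g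
   (taken inside T''(X), so equal to T''(X) when no maximal ideal contains g). *)
Definition Mint (R : realType) (X : topologicalType) (g : X -> R) : set (X -> R) :=
  [set f | Tpp R X f /\ forall M, Tpp_maximal_ideal R X M -> M g -> M f].

Definition Zset (R : realType) (X : Type) (f : X -> R) : set X := [set x | f x = 0].

From HB Require Import structures.
From mathcomp Require Import all_boot all_order all_algebra.
From mathcomp Require Import all_classical all_reals all_analysis.
Import Order.TTheory GRing.Theory Num.Theory numFieldNormedType.Exports.
Local Open Scope classical_set_scope.
Local Open Scope ring_scope.

(* For every point x, the functions of T''(X) vanishing at x form a maximal
   ideal M_x: it is the kernel of evaluation at x, which maps onto R because
   T''(X) contains the constants.  If g x = 0 then g lies in M_x, hence so does
   every f in M(g), i.e. f x = 0. *)

Section TppRing.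
Variables (R : realType) (X : topologicalType).

Lemma cozero_set_open (U : set X) : cozero_set R X U -> open U.
Proof.
move=> [h [hc ->]].
have -> : [set x | h x != 0] = h @^-1` [set y : R | y != 0] by [].
by apply: open_comp => [x _|]; [exact: hc | exact: open_neq].
Qed.

Lemma cozero_setT : cozero_set R X setT.
Proof.
exists (fun _ => 1); split; first by move=> x; exact: cvg_cst.
by apply/seteqP; split => x //= _; rewrite oner_neq0.
Qed.

Lemma cozero_setI (U V : set X) :
  cozero_set R X U -> cozero_set R X V -> cozero_set R X (U `&` V).
Proof.
move=> [h [hc ->]] [k [kc ->]]; exists (h \* k); split.
  by move=> x; apply: continuousM; [exact: hc | exact: kc].
by apply/seteqP; split => x /=; rewrite mulf_eq0 negb_or => /andP.
Qed.

Lemma Tpp_common_domain {a b : X -> R} : Tpp R X a -> Tpp R X b ->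
  exists U : set X, [/\ cozero_set R X U, dense U,
    {within U, continuous a} & {within U, continuous b}].
Proof.
move=> [U [cU [dU aU]]] [V [cV [dV bV]]]; exists (U `&` V); split.
- exact: cozero_setI.
- by apply: denseI dU dV; exact: cozero_set_open.
- exact: continuous_subspaceW (@subIsetl _ U V) aU.
- exact: continuous_subspaceW (@subIsetr _ U V) bV.
Qed.

Lemma Tpp_cst (c : R) : Tpp R X (fun _ => c).
Proof.
exists setT; split; first exact: cozero_setT.
split; last by apply: continuous_subspaceT => x; exact: cvg_cst.
by move=> O [y Oy] _; exists y.
Qed.

Lemma Tpp_sub (a b : X -> R) :
  Tpp R X a -> Tpp R X b -> Tpp R X (fun x => a x - b x).
Proof.
move=> ta tb; have [U [cU dU aU bU]] := Tpp_common_domain ta tb.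
exists U; split => //; split => // x.
exact: (@continuousB R R^o (subspace U) a b x (aU x) (bU x)).
Qed.

Lemma Tpp_mul (a b : X -> R) :
  Tpp R X a -> Tpp R X b -> Tpp R X (fun x => a x * b x).
Proof.
move=> ta tb; have [U [cU dU aU bU]] := Tpp_common_domain ta tb.
exists U; split => //; split => // x.
exact: (@continuousM R (subspace U) a b x (aU x) (bU x)).
Qed.

Definition Tpp_vanishing_at (x : X) : set (X -> R) :=
  [set h | Tpp R X h /\ h x = 0].

Lemma Tpp_vanishing_at_ideal (x : X) : Tpp_ideal R X (Tpp_vanishing_at x).
Proof.
split.
- by move=> h [].
- by split; [exact: Tpp_cst |].
- move=> a b [ta ax] [tb bx]; split; first exact: Tpp_sub.
  by rewrite /= ax bx subrr.
- move=> r a tr [ta ax]; split; first exact: Tpp_mul.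
  by rewrite /= ax mulr0.
Qed.

Lemma Tpp_vanishing_at_proper (x : X) : Tpp_vanishing_at x <> Tpp R X.
Proof.
move=> E; have : Tpp_vanishing_at x (fun _ => 1) by rewrite E; exact: Tpp_cst.
by move=> [_ /eqP]; rewrite oner_eq0.
Qed.

(* J contains h and h - h x, hence the constant h x, which is a unit of T''(X). *)
Lemma Tpp_ideal_nonvanishing_full {x : X} {J : set (X -> R)} {h : X -> R} :
  Tpp_ideal R X J -> Tpp_vanishing_at x `<=` J -> J h -> h x != 0 ->
  J = Tpp R X.
Proof.
move=> [JT _ JB JM] MJ Jh hx; have th := JT h Jh.
apply/seteqP; split => // k tk.
have Jhx : J (fun y => h y - h x).
  by apply: MJ; split; [apply: Tpp_sub => //; exact: Tpp_cst | rewrite subrr].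
have Jcst := JB _ _ Jh Jhx.
have tk' : Tpp R X (fun y => k y * (h x)^-1) by apply: Tpp_mul => //; exact: Tpp_cst.
have := JM _ _ tk' Jcst; congr J; apply/funext => y /=.
by rewrite opprB addrC subrK mulrVK // unitfE.
Qed.

Lemma Tpp_vanishing_at_maximal (x : X) :
  Tpp_maximal_ideal R X (Tpp_vanishing_at x).
Proof.
split; [exact: Tpp_vanishing_at_ideal | exact: Tpp_vanishing_at_proper |].
move=> J idJ MJ; have [JM | /existsNP [h /not_implyP [Jh Mh]]] :=
  pselect (J `<=` Tpp_vanishing_at x).
  by left; apply/seteqP; split.
right; apply: (Tpp_ideal_nonvanishing_full idJ MJ Jh).
by apply/eqP => hx0; apply: Mh; split => //; case: idJ => + _ _ _; apply.
Qed.

End TppRing.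

Theorem lemma5p0 (R : realType) (X : topologicalType)
  (hT1 : accessible_space X) (f g : X -> R) :
  Tpp R X f -> Tpp R X g -> Mint R X g f -> Zset R X g `<=` Zset R X f.
Proof.
move=> _ tg [_ inM] x gx.
by have [] := inM _ (Tpp_vanishing_at_maximal R X x) (conj tg gx).
Qed.
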